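(* Let $k\ge1$ and $a_k\in\mathbb{R}$. The sequence $\{a_k n^k \bmod 1\}_{n\ge0}$ in $\mathbb{T}$ has the repetition property if and only if $\liminf_{q\to\infty} q^{k-1}\langle a_k q\rangle = 0$ (with $q$ ranging over positive integers).
   Context: $\mathbb{T}=\mathbb{R}/\mathbb{Z}$ with metric $\mathrm{dist}(x,y)=\langle x-y\rangle$, where for $x\in\mathbb{R}$ (or its class in $\mathbb{T}$), $\langle x\rangle=\min\{|x-p|:p\in\mathbb{Z}\}$ is the distance to the nearest integer. $\mathbb{Z}_+=\{1,2,\ldots\}$. A sequence $\{\omega_n\}_{n\ge0}$ in a metric space $\Omega$ has the repetition property if for every $\varepsilon>0$ and $r \in \mathbb{Z}_+$ there exists $q \in \mathbb{Z}_+$ such that $\mathrm{dist}(\omega_n,\omega_{n+q}) < \varepsilon$ for $n = 0,1,\ldots, rq$. *)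

From Stdlib Require Import Reals Lra Lia.
Open Scope R_scope.

(* <x> : distance from x to the nearest integer.  [up x] is the unique
   integer with x < up x <= x + 1, so the floor of x is up x - 1. *)
Definition nint_dist (x : R) : R :=
  Rmin (x - (IZR (up x) - 1)) (IZR (up x) - x).

(* Metric on T = R/Z, applied to representatives in R. *)
Definition tdist (x y : R) : R := nint_dist (x - y).

Definition repetition_property (w : nat -> R) : Prop :=
  forall (eps : R) (r : nat), 0 < eps -> (1 <= r)%nat ->
    exists q : nat, (1 <= q)%nat /\
      forall n : nat, (n <= r * q)%nat -> tdist (w n) (w (n + q)%nat) < eps.

(* liminf_{q -> oo, q in Z_+} u q = 0, for a sequence u with u q >= 0
   (here every term is nonnegative, so liminf = 0 iff arbitrarily small
   values occur arbitrarily far out). *)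
Definition liminf_zero (u : nat -> R) : Prop :=
  forall (eps : R) (N : nat), 0 < eps ->
    exists q : nat, (N <= q)%nat /\ (1 <= q)%nat /\ u q < eps.

From Stdlib Require Import Reals Lra Lia ZArith.
Open Scope R_scope.

(* Write ||x|| for [nint_dist x] and k = d + 1.

   (<=)  If q^d ||a q|| is small, then for every n the increment
         a (n+q)^k - a n^k = z * (a q) with z a natural number of size
         at most k ((r+1) q)^d when n <= r q, hence
         ||a (n+q)^k - a n^k|| <= z ||a q|| is small.

   (=>)  A function g : nat -> R "of degree d with leading coefficient c"
         (its d-fold iterated differences with steps h_1..h_d are the
         constant c d! h_1...h_d) which is delta-close to Z on [0, dH] has
         ||c d!|| <= 2^d delta / H^d: induct on d, using that a real theta
         with ||h theta|| <= delta < 1/4 for h = 1..H satisfies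
         ||theta|| <= delta / H.  Applied to g n = a (n+q)^k - a n^k
         (degree d, leading coefficient k a q) this gives q^d ||k! a q||
         small; multiplying q by N k! then yields arbitrarily large q' with
         q'^d ||a q'|| small. *)

Lemma nint_dist_le_int (x : R) (m : Z) : nint_dist x <= Rabs (x - IZR m).
Proof.
  unfold nint_dist. destruct (archimed x) as [Hup1 Hup2].
  destruct (Z_le_gt_dec (up x) m) as [Hm|Hm].
  - apply IZR_le in Hm. rewrite Rabs_left1 by lra.
    eapply Rle_trans; [apply Rmin_r|lra].
  - assert (Hm' : (m <= up x - 1)%Z) by lia. apply IZR_le in Hm'.
    rewrite minus_IZR in Hm'. rewrite Rabs_right by lra.
    eapply Rle_trans; [apply Rmin_l|lra].
Qed.

Lemma nint_dist_attained (x : R) : exists m : Z, nint_dist x = Rabs (x - IZR m).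
Proof.
  unfold nint_dist. destruct (archimed x) as [Hup1 Hup2].
  unfold Rmin. destruct (Rle_dec _ _).
  - exists (up x - 1)%Z. rewrite minus_IZR. rewrite Rabs_right by lra. lra.
  - exists (up x). rewrite Rabs_left1 by lra. lra.
Qed.

Lemma nint_dist_nonneg (x : R) : 0 <= nint_dist x.
Proof. destruct (nint_dist_attained x) as [m ->]. apply Rabs_pos. Qed.

Lemma nint_dist_le_abs (x : R) : nint_dist x <= Rabs x.
Proof. pose proof (nint_dist_le_int x 0) as H. rewrite Rminus_0_r in H. exact H. Qed.

Lemma nint_dist_add_int (x : R) (m : Z) : nint_dist (x + IZR m) = nint_dist x.
Proof.
  apply Rle_antisym.
  - destruct (nint_dist_attained x) as [m0 ->].
    eapply Rle_trans; [apply (nint_dist_le_int _ (m0 + m))|].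
    rewrite plus_IZR. right. f_equal. ring.
  - destruct (nint_dist_attained (x + IZR m)) as [m0 ->].
    eapply Rle_trans; [apply (nint_dist_le_int _ (m0 - m))|].
    rewrite minus_IZR. right. f_equal. ring.
Qed.

Lemma nint_dist_add (x y : R) : nint_dist (x + y) <= nint_dist x + nint_dist y.
Proof.
  destruct (nint_dist_attained x) as [m1 ->], (nint_dist_attained y) as [m2 ->].
  eapply Rle_trans; [apply (nint_dist_le_int _ (m1 + m2))|]. rewrite plus_IZR.
  replace (x + y - (IZR m1 + IZR m2)) with ((x - IZR m1) + (y - IZR m2)) by ring.
  apply Rabs_triang.
Qed.

Lemma nint_dist_opp (x : R) : nint_dist (- x) = nint_dist x.
Proof.
  assert (Hle : forall y, nint_dist (- y) <= nint_dist y).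
  { intro y. destruct (nint_dist_attained y) as [m ->].
    eapply Rle_trans; [apply (nint_dist_le_int _ (- m))|].
    rewrite opp_IZR, <- Rabs_Ropp. right. f_equal. ring. }
  apply Rle_antisym; [apply Hle|]. rewrite <- (Ropp_involutive x) at 1. apply Hle.
Qed.

Lemma nint_dist_sub (x y : R) : nint_dist (x - y) <= nint_dist x + nint_dist y.
Proof. unfold Rminus. rewrite <- (nint_dist_opp y). apply nint_dist_add. Qed.

Lemma nint_dist_small (x : R) : Rabs x <= 1/2 -> nint_dist x = Rabs x.
Proof.
  intro Hx. apply Rle_antisym; [apply nint_dist_le_abs|].
  destruct (nint_dist_attained x) as [m ->].
  destruct (Z.eq_dec m 0) as [->|Hne]; [rewrite Rminus_0_r; lra|].
  assert (Hm : 1 <= Rabs (IZR m)).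
  { rewrite <- abs_IZR. apply (IZR_le 1). lia. }
  pose proof (Rabs_triang_inv (IZR m) x). rewrite Rabs_minus_sym. lra.
Qed.

Lemma nint_dist_mul_nat (m : nat) (x : R) : nint_dist (INR m * x) <= INR m * nint_dist x.
Proof.
  induction m as [|m IHm].
  - rewrite Rmult_0_l, Rmult_0_l. pose proof (nint_dist_le_abs 0). rewrite Rabs_R0 in H. lra.
  - rewrite S_INR. replace ((INR m + 1) * x) with (INR m * x + x) by ring.
    eapply Rle_trans; [apply nint_dist_add|]. lra.
Qed.

(* If the multiples h theta, 1 <= h <= H, all stay within delta < 1/4 of Z,
   then theta itself is within delta / H of Z: the representative s of theta
   modulo Z cannot jump over an integer, so |h s| <= delta for all h <= H. *)
Lemma nint_dist_of_small_multiples (theta delta : R) (H : nat) :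
  (1 <= H)%nat -> delta < 1/4 ->
  (forall h, (1 <= h <= H)%nat -> nint_dist (INR h * theta) <= delta) ->
  nint_dist theta <= delta / INR H.
Proof.
  intros HH Hdelta Hmult.
  destruct (nint_dist_attained theta) as [m Hm]. set (s := theta - IZR m) in Hm.
  assert (Hs : Rabs s <= delta).
  { rewrite <- Hm, <- (Rmult_1_l theta). apply (Hmult 1%nat). lia. }
  assert (Hrep : forall h, INR h * s = INR h * theta + IZR (- (Z.of_nat h * m))).
  { intro h. unfold s. rewrite opp_IZR, mult_IZR, <- INR_IZR_INZ. ring. }
  assert (Hsteps : forall h, (h <= H)%nat -> Rabs (INR h * s) <= delta).
  { induction h as [|h IHh]; intro Hh.
    - rewrite Rmult_0_l, Rabs_R0. pose proof (Rabs_pos s). lra.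
    - assert (Hjump : Rabs (INR (S h) * s) <= 2 * delta).
      { rewrite S_INR. replace ((INR h + 1) * s) with (INR h * s + s) by ring.
        eapply Rle_trans; [apply Rabs_triang|]. specialize (IHh ltac:(lia)). lra. }
      rewrite <- nint_dist_small by lra.
      rewrite Hrep, nint_dist_add_int. apply Hmult. lia. }
  specialize (Hsteps H (le_n H)).
  rewrite Rabs_mult, Rabs_right in Hsteps by (apply Rle_ge, pos_INR).
  assert (0 < INR H) by (apply lt_0_INR; lia).
  rewrite Hm. apply Rmult_le_reg_l with (INR H); auto.
  field_simplify; lra.
Qed.

(* [has_leading_coeff d c g]: g behaves like a polynomial of degree d with
   leading coefficient c, i.e. the iterated differences
   Delta_{h_1} ... Delta_{h_d} g are the constant c d! h_1 ... h_d. *)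
Fixpoint has_leading_coeff (d : nat) (c : R) (g : nat -> R) : Prop :=
  match d with
  | O => forall n, g n = c
  | S d' => forall h, has_leading_coeff d' (c * INR (S d') * INR h)
                                        (fun n => g (n + h)%nat - g n)
  end.

Lemma has_leading_coeff_ext (d : nat) : forall c c' g g',
  c = c' -> (forall n, g n = g' n) ->
  has_leading_coeff d c g -> has_leading_coeff d c' g'.
Proof.
  induction d as [|d IHd]; intros c c' g g' Hc Hg Hlead.
  - intro n. rewrite <- Hg, <- Hc. apply Hlead.
  - intro h. eapply IHd; [| |apply (Hlead h)].
    + rewrite Hc. reflexivity.
    + intro n. simpl. rewrite !Hg. reflexivity.
Qed.

Lemma has_leading_coeff_add (d : nat) : forall c c' g g',
  has_leading_coeff d c g -> has_leading_coeff d c' g' ->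
  has_leading_coeff d (c + c') (fun n => g n + g' n).
Proof.
  induction d as [|d IHd]; intros c c' g g' Hg Hg'.
  - intro n. rewrite Hg, Hg'. reflexivity.
  - intro h. eapply has_leading_coeff_ext; [| |apply (IHd _ _ _ _ (Hg h) (Hg' h))].
    + ring.
    + intro n. simpl. ring.
Qed.

Lemma has_leading_coeff_scale (d : nat) : forall b c g,
  has_leading_coeff d c g -> has_leading_coeff d (b * c) (fun n => b * g n).
Proof.
  induction d as [|d IHd]; intros b c g Hg.
  - intro n. rewrite Hg. reflexivity.
  - intro h. eapply has_leading_coeff_ext; [| |apply (IHd b _ _ (Hg h))].
    + ring.
    + intro n. simpl. ring.
Qed.

Lemma has_leading_coeff_shift (d : nat) : forall m c g,
  has_leading_coeff d c g -> has_leading_coeff d c (fun n => g (n + m)%nat).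
Proof.
  induction d as [|d IHd]; intros m c g Hg.
  - intro n. apply Hg.
  - intro h. eapply has_leading_coeff_ext; [reflexivity| |apply (IHd m _ _ (Hg h))].
    intro n. simpl. replace (n + m + h)%nat with (n + h + m)%nat by lia. reflexivity.
Qed.

(* Multiplying by n raises the degree by one and keeps the leading coefficient:
   Delta_h (n g n) = n Delta_h g n + h g (n + h). *)
Lemma has_leading_coeff_mul_id (d : nat) : forall c g,
  has_leading_coeff d c g -> has_leading_coeff (S d) c (fun n => INR n * g n).
Proof.
  induction d as [|d IHd]; intros c g Hg.
  - intros h n. simpl in Hg. rewrite !Hg, plus_INR. simpl. ring.
  - intro h.
    pose proof (has_leading_coeff_add _ _ _ _ _ (IHd _ _ (Hg h))
      (has_leading_coeff_scale _ (INR h) _ _ (has_leading_coeff_shift (S d) h _ _ Hg))) as Hsum.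
    eapply has_leading_coeff_ext; [| |apply Hsum].
    + rewrite (S_INR (S d)). ring.
    + intro n. simpl. rewrite plus_INR. ring.
Qed.

Lemma has_leading_coeff_monomial (k : nat) : has_leading_coeff k 1 (fun n => INR n ^ k).
Proof.
  induction k as [|k IHk].
  - intro n. reflexivity.
  - exact (has_leading_coeff_mul_id _ _ _ IHk).
Qed.

(* Each difference
   Delta_h g (1 <= h <= H) is 2 delta-close to Z on [0, (d-1)H] and has
   leading coefficient h times that of g, so induction gives
   ||h (c d!)|| <= 2^d delta / H^(d-1), and we conclude with
   [nint_dist_of_small_multiples]. *)
Lemma leading_coeff_nint_dist (d : nat) : forall (c : R) (g : nat -> R) (delta : R) (H : nat),
  has_leading_coeff d c g -> (1 <= H)%nat -> 2 ^ d * delta < 1/4 ->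
  (forall n, (n <= d * H)%nat -> nint_dist (g n) <= delta) ->
  nint_dist (c * INR (fact d)) <= 2 ^ d * delta / INR H ^ d.
Proof.
  induction d as [|d IHd]; intros c g delta H Hlead HH Hsmall Hclose.
  - simpl. replace (1 * delta / 1) with delta by field.
    rewrite Rmult_1_r, <- (Hlead 0%nat). apply Hclose. lia.
  - assert (Hdelta : 0 <= delta).
    { eapply Rle_trans; [apply nint_dist_nonneg|apply (Hclose 0%nat); lia]. }
    assert (HHpos : 0 < INR H) by (apply lt_0_INR; lia).
    assert (HHd : 1 <= INR H ^ d) by (apply pow_R1_Rle, (le_INR 1); lia).
    assert (H2d : 0 < 2 ^ d) by (apply pow_lt; lra).
    simpl in Hsmall.
    apply Rle_trans with ((2 ^ d * (2 * delta) / INR H ^ d) / INR H).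
    + apply nint_dist_of_small_multiples; [exact HH| |].
      * apply Rle_lt_trans with (2 ^ d * (2 * delta)); [|lra].
        assert (Hnum : 0 <= 2 ^ d * (2 * delta)) by nra.
        apply Rmult_le_reg_r with (INR H ^ d); [lra|].
        unfold Rdiv. rewrite Rmult_assoc, Rinv_l, Rmult_1_r by lra. nra.
      * intros h Hh.
        replace (INR h * (c * INR (fact (S d))))
          with (c * INR (S d) * INR h * INR (fact d))
          by (rewrite fact_simpl, mult_INR; ring).
        apply (IHd _ _ _ H (Hlead h) HH); [lra|].
        intros n Hn. eapply Rle_trans; [apply nint_dist_sub|].
        pose proof (Hclose (n + h)%nat ltac:(simpl; lia)).
        pose proof (Hclose n ltac:(simpl; lia)). lra.
    + right. simpl. field. lra.
Qed.

Lemma pow_succ_increment (d n q : nat) :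
  exists z, ((n + q) ^ S d = n ^ S d + q * z /\ z <= S d * (n + q) ^ d)%nat.
Proof.
  induction d as [|d [z [Hz Hzb]]].
  - exists 1%nat. simpl. lia.
  - exists (n ^ S d + (n + q) * z)%nat. split.
    + rewrite (Nat.pow_succ_r' (n + q)), (Nat.pow_succ_r' n (S d)), Hz. ring.
    + assert (Hmono : (n ^ S d <= (n + q) ^ S d)%nat) by (apply Nat.pow_le_mono_l; lia).
      rewrite (Nat.pow_succ_r' (n + q) d) in Hmono |- *. nia.
Qed.

Lemma liminf_implies_repetition (d : nat) (a : R) :
  liminf_zero (fun q => INR q ^ d * nint_dist (a * INR q)) ->
  repetition_property (fun n => a * INR n ^ S d).
Proof.
  intros Hlim eps r Heps Hr.
  set (C := INR (S d) * (INR r + 1) ^ d).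
  assert (HC : 0 < C).
  { unfold C. apply Rmult_lt_0_compat; [apply lt_0_INR; lia|apply pow_lt].
    pose proof (pos_INR r). lra. }
  destruct (Hlim (eps / C) 1%nat ltac:(apply Rdiv_lt_0_compat; lra)) as [q [_ [Hq Hsmall]]].
  exists q. split; [exact Hq|]. intros n Hn.
  destruct (pow_succ_increment d n q) as [z [Hz Hzb]].
  assert (Hincr : a * INR n ^ S d - a * INR (n + q) ^ S d = - (INR z * (a * INR q))).
  { rewrite <- !pow_INR, Hz, plus_INR, mult_INR. ring. }
  assert (Hzsize : INR z <= C * INR q ^ d).
  { apply le_INR in Hzb. rewrite mult_INR, pow_INR in Hzb.
    assert (Hnq : INR (n + q) <= (INR r + 1) * INR q).
    { rewrite <- (INR_1), <- plus_INR, <- mult_INR. apply le_INR. lia. }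
    assert (Hpow : INR (n + q) ^ d <= ((INR r + 1) * INR q) ^ d).
    { apply pow_incr. split; [apply pos_INR|exact Hnq]. }
    rewrite Rpow_mult_distr in Hpow. unfold C. rewrite Rmult_assoc.
    eapply Rle_trans; [exact Hzb|]. apply Rmult_le_compat_l; [apply pos_INR|exact Hpow]. }
  unfold tdist. rewrite Hincr, nint_dist_opp.
  eapply Rle_lt_trans; [apply nint_dist_mul_nat|].
  pose proof (nint_dist_nonneg (a * INR q)).
  apply Rle_lt_trans with (C * (INR q ^ d * nint_dist (a * INR q))); [nra|].
  apply Rmult_lt_compat_l with (r := C) in Hsmall; [|exact HC].
  replace (C * (eps / C)) with eps in Hsmall by (field; lra). exact Hsmall.
Qed.

(* (=>), first half: the repetition property makes q^d ||(d+1)! a q|| small,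
   by [leading_coeff_nint_dist] applied to g n = a (n+q)^(d+1) - a n^(d+1),
   whose leading coefficient is (d+1) a q. *)
Lemma repetition_small_multiple (d : nat) (a : R) :
  repetition_property (fun n => a * INR n ^ S d) ->
  forall e, 0 < e -> exists q, (1 <= q)%nat /\
    INR q ^ d * nint_dist (INR (fact (S d)) * (a * INR q)) < e.
Proof.
  intros Hrep e He.
  assert (H2d : 0 < 2 ^ d) by (apply pow_lt; lra).
  set (delta := Rmin (1 / (8 * 2 ^ d)) (e / (2 * 2 ^ d))).
  assert (Hdelta : 0 < delta) by (apply Rmin_pos; apply Rdiv_lt_0_compat; lra).
  assert (Hdelta_small : 2 ^ d * delta <= 1 / 8).
  { apply Rle_trans with (2 ^ d * (1 / (8 * 2 ^ d))); [apply Rmult_le_compat_l; [lra|apply Rmin_l]|].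
    right. field. lra. }
  assert (Hdelta_e : 2 ^ d * delta <= e / 2).
  { apply Rle_trans with (2 ^ d * (e / (2 * 2 ^ d))); [apply Rmult_le_compat_l; [lra|apply Rmin_r]|].
    right. field. lra. }
  destruct (Hrep delta (S d) Hdelta ltac:(lia)) as [q [Hq Hclose]].
  assert (Hqd : 0 < INR q ^ d) by (apply pow_lt, lt_0_INR; lia).
  pose proof (has_leading_coeff_scale _ a _ _ (has_leading_coeff_monomial (S d)) q) as Hlead.
  pose proof (leading_coeff_nint_dist d _ _ delta q Hlead Hq ltac:(lra)) as Hcoeff.
  exists q. split; [exact Hq|].
  replace (INR (fact (S d)) * (a * INR q)) with (a * 1 * INR (S d) * INR q * INR (fact d))
    by (rewrite fact_simpl, mult_INR; ring).
  apply Rle_lt_trans with (INR q ^ d * (2 ^ d * delta / INR q ^ d)).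
  - apply Rmult_le_compat_l; [lra|]. apply Hcoeff.
    intros n Hn. specialize (Hclose n ltac:(lia)). unfold tdist in Hclose.
    rewrite <- nint_dist_opp.
    replace (- (a * INR (n + q) ^ S d - a * INR n ^ S d))
      with (a * INR n ^ S d - a * INR (n + q) ^ S d) by ring. lra.
  - replace (INR q ^ d * (2 ^ d * delta / INR q ^ d)) with (2 ^ d * delta) by (field; lra). lra.
Qed.

(* (=>), second half: if q^d ||K x q|| can be made small for a fixed K >= 1,
   then so can q'^d ||x q'|| for q' = N K q >= N, since
   q'^d ||x q'|| <= N^(d+1) K^d (q^d ||K x q||). *)
Lemma liminf_zero_of_multiples (d K : nat) (x : R) : (0 < K)%nat ->
  (forall e, 0 < e -> exists q, (1 <= q)%nat /\ INR q ^ d * nint_dist (INR K * (x * INR q)) < e) ->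
  liminf_zero (fun q => INR q ^ d * nint_dist (x * INR q)).
Proof.
  intros HK Hsmall eps N Heps.
  set (M := S N).
  assert (HMpos : 0 < INR M) by (apply lt_0_INR; unfold M; lia).
  assert (HKpos : 0 < INR K) by (apply lt_0_INR; lia).
  set (P := INR M ^ S d * INR K ^ d).
  assert (HP : 0 < P) by (unfold P; apply Rmult_lt_0_compat; apply pow_lt; lra).
  destruct (Hsmall (eps / P) ltac:(apply Rdiv_lt_0_compat; lra)) as [q [Hq Hq_small]].
  exists (M * K * q)%nat. split; [unfold M; nia|]. split; [unfold M; nia|].
  assert (Hmult : nint_dist (x * INR (M * K * q)) <= INR M * nint_dist (INR K * (x * INR q))).
  { replace (x * INR (M * K * q)) with (INR M * (INR K * (x * INR q)))
      by (rewrite !mult_INR; ring).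
    apply nint_dist_mul_nat. }
  apply Rle_lt_trans with (P * (INR q ^ d * nint_dist (INR K * (x * INR q)))).
  - replace (P * (INR q ^ d * nint_dist (INR K * (x * INR q))))
      with (INR (M * K * q) ^ d * (INR M * nint_dist (INR K * (x * INR q))))
      by (unfold P; rewrite !mult_INR, !Rpow_mult_distr; simpl; ring).
    apply Rmult_le_compat_l; [apply pow_le, pos_INR|exact Hmult].
  - apply Rmult_lt_compat_l with (r := P) in Hq_small; [|exact HP].
    replace (P * (eps / P)) with eps in Hq_small by (field; lra). exact Hq_small.
Qed.

Theorem theorem3p5 (k : nat) (a : R) (hk : (1 <= k)%nat) :
  repetition_property (fun n : nat => a * INR n ^ k)
  <-> liminf_zero (fun q : nat => INR q ^ (k - 1) * nint_dist (a * INR q)).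
Proof.
  destruct k as [|d]; [lia|]. replace (S d - 1)%nat with d by lia.
  split.
  - intro Hrep. apply (liminf_zero_of_multiples d (fact (S d)) a (lt_O_fact (S d))).
    exact (repetition_small_multiple d a Hrep).
  - apply liminf_implies_repetition.
Qed.
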